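(* If $\sigma(x)/x\in\mathbb{Z}[\zeta_p]$, then $I=x\mathcal{O}_\mathbb{K}$, i.e. $I$ is the principal ideal of $\mathcal{O}_\mathbb{K}$ generated by $x$.
   Context: Let $n>1$ be an odd integer and $p$ a prime with $p\equiv 1 \pmod n$. Let $\zeta_p=e^{2\pi i/p}$, let $r$ be a primitive root modulo $p$, and let $\sigma$ be the automorphism of $\mathbb{Q}(\zeta_p)$ with $\sigma(\zeta_p)=\zeta_p^r$. Let $\mathbb{K}=\{y\in\mathbb{Q}(\zeta_p):\sigma^n(y)=y\}$. Let $\alpha=\prod_{j=0}^{(p-3)/2}(1-\zeta_p^{r^j})$, let $\lambda$ be an integer with $\lambda(r-1)\equiv1\pmod p$, $z=\zeta_p^{\lambda}\alpha(1-\zeta_p)$, and $x=\mathrm{Tr}_{\mathbb{Q}(\zeta_p)/\mathbb{K}}(z)=\sum_{j=1}^{(p-1)/n}\sigma^{jn}(z)$. Let $I$ be the $\mathbb{Z}$-module generated by $x,\sigma(x),\dots,\sigma^{n-1}(x)$ (it is an ideal of $\mathcal{O}_\mathbb{K}$). *)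

From HB Require Import structures.
From mathcomp Require Import all_boot all_order all_algebra all_field.
Set Implicit Arguments. Unset Strict Implicit. Unset Printing Implicit Defensive.
Import Order.TTheory GRing.Theory Num.Theory.
Local Open Scope ring_scope.

(* zeta_p = e^{2 pi i/p}: p.-root (-1) is the root of -1 of minimal
   argument, i.e. e^{i pi/p}; its square is e^{2 pi i/p}. *)
Definition zeta (p : nat) : algC := (p.-root (-1)) ^+ 2.

Definition Qzeta (p : nat) (y : algC) : Prop :=
  exists q : {poly rat}, y = (map_poly ratr q).[zeta p].

Definition Zzeta (p : nat) (y : algC) : Prop :=
  exists q : {poly int}, y = (map_poly intr q).[zeta p].

Definition Kfix (p n : nat) (s : algC -> algC) (y : algC) : Prop :=
  Qzeta p y /\ iter n s y = y.

Definition OK (p n : nat) (s : algC -> algC) (y : algC) : Prop :=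
  Kfix p n s y /\ y \in Aint.

Definition alpha (p r : nat) : algC :=
  \prod_(j < (p.-1)./2) (1 - zeta p ^+ (r ^ j)).

Definition zz (p r : nat) (lam : int) : algC :=
  zeta p ^ lam * alpha p r * (1 - zeta p).

(* x = Tr_{Q(zeta)/K}(z) = sum_{j=1}^{(p-1)/n} sigma^{jn}(z) *)
Definition xx (p n r : nat) (lam : int) (s : algC -> algC) : algC :=
  \sum_(1 <= j < ((p.-1) %/ n).+1) iter (j * n) s (zz p r lam).

Definition Imod (p n r : nat) (lam : int) (s : algC -> algC) (w : algC) : Prop :=
  exists c : 'I_n -> int,
    w = \sum_(i < n) (iter i s (xx p n r lam s)) *~ c i.

Definition principal (p n r : nat) (lam : int) (s : algC -> algC) (w : algC) : Prop :=
  exists2 y, OK p n s y & w = xx p n r lam s * y.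

From HB Require Import structures.
From mathcomp Require Import all_boot all_order all_algebra all_field.
From mathcomp Require Import zify ring.
Import Order.TTheory GRing.Theory Num.Theory.
Set Implicit Arguments.
Unset Strict Implicit.
Unset Printing Implicit Defensive.
Local Open Scope ring_scope.

(* Since lam (r - 1) = 1 mod p, sigma multiplies zeta^lam by zeta, and sigma
   maps alpha to - zeta^(-1) alpha; hence sigma^k(z) = +- zeta^lam alpha (1 - zeta^(r^k)),
   and as r^k runs over all units mod p, every z_a := zeta^lam alpha (1 - zeta^a) is
   +- a conjugate sigma^k(z) (or 0 when p | a).  An element y of O_K lies in Z[zeta],
   the ring of integers of Q(zeta), so y = sum_i q_i zeta^i, and since sigma^n fixes y,
   x y = Tr(z y) = sum_i q_i (Tr(z_(i+1)) - Tr(z_i)) with Tr(sigma^k z) = sigma^k(x):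
   thus x O_K is contained in I.  Conversely sigma^i(x)/x is a product of conjugates of
   sigma(x)/x, hence lies in Z[zeta], so every Z-combination of the sigma^i(x) is x
   times an element of Z[zeta] fixed by sigma^n. *)

Section IterRMorphism.
Variables (R : pzRingType) (f : {rmorphism R -> R}) (k : nat).

Lemma iter_is_zmod_morphism : zmod_morphism (iter k f).
Proof. by move=> x y; elim: k => //= j ->; rewrite rmorphB. Qed.

Lemma iter_is_monoid_morphism : monoid_morphism (iter k f).
Proof.
split; first by elim: k => //= j ->; rewrite rmorph1.
by move=> x y; elim: k => //= j ->; rewrite rmorphM.
Qed.

HB.instance Definition _ :=
  GRing.isZmodMorphism.Build R R (iter k f) iter_is_zmod_morphism.
HB.instance Definition _ :=
  GRing.isMonoidMorphism.Build R R (iter k f) iter_is_monoid_morphism.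

End IterRMorphism.

Lemma sum_exprs_root1_eq0 (R : idomainType) (x : R) m :
  x ^+ m = 1 -> x != 1 -> \sum_(t < m) x ^+ t = 0.
Proof.
move=> xm x1; have := subrX1 x m; rewrite xm subrr => /esym/eqP.
by rewrite mulf_eq0 subr_eq0 (negbTE x1) => /eqP.
Qed.

Section Cyclotomic.
Variable p : nat.
Hypothesis p_pr : prime p.

Lemma zeta_prim_root : p.-primitive_root (zeta p).
Proof.
have p_gt1 := prime_gt1 p_pr.
have wp : (p.-root (-1 : algC)) ^+ p = -1 by rewrite rootCK ?prime_gt0.
have zp : zeta p ^+ p = 1 by rewrite /zeta -exprM mulnC exprM wp sqrrN expr1n.
have z1 : zeta p != 1.
  rewrite /zeta sqrf_eq1 negb_or; apply/andP; split.
    apply/eqP=> w1; move: wp; rewrite w1 expr1n => /eqP.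
    by rewrite -addr_eq0 (eqr_nat _ 2 0).
  by apply/eqP=> wN; have := rootC_lt0 (-1 : algC) p_gt1; rewrite wN ltrN10.
have [m pm dvd_m] := prim_order_exists (prime_gt0 p_pr) zp.
case/primeP: p_pr => _ /(_ m dvd_m) /orP[] /eqP m_eq; subst m => //.
by move: z1; rewrite -(prim_expr_order pm) expr1 eqxx.
Qed.

Lemma zeta_neq0 : zeta p != 0.
Proof. by rewrite (prim_root_eq0 zeta_prim_root) -lt0n prime_gt0. Qed.

Lemma zetaX_eq1 i : (zeta p ^+ i == 1) = (p %| i)%N.
Proof. by rewrite (prim_order_dvd zeta_prim_root). Qed.

Lemma zeta_mul_expr_pred : zeta p * zeta p ^+ p.-1 = 1.
Proof. by rewrite -exprS prednK ?prime_gt0 // (prim_expr_order zeta_prim_root). Qed.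

Lemma zeta_Aint : zeta p \in Aint.
Proof. exact: Aint_prim_root zeta_prim_root. Qed.

Lemma sum_expr_zetaX j :
  \sum_(1 <= t < p) (zeta p ^+ j) ^+ t = if (p %| j)%N then (p.-1)%:R else -1.
Proof.
have p_gt0 := prime_gt0 p_pr.
apply: (addrI 1); rewrite -[in LHS](expr0 (zeta p ^+ j)) -big_ltn // big_mkord.
case: ifP => [dvd_j | ndvd_j].
  have /eqP -> : zeta p ^+ j == 1 by rewrite zetaX_eq1 dvd_j.
  under eq_bigr do rewrite expr1n.
  by rewrite sumr_const card_ord -{1}(prednK p_gt0) mulrS.
rewrite sum_exprs_root1_eq0 ?subrr ?zetaX_eq1 ?ndvd_j //.
by rewrite -exprM mulnC exprM (prim_expr_order zeta_prim_root) expr1n.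
Qed.

(* Divide X^p - 1 = (X - 1) \prod_(1 <= t < p) (X - zeta^t) by X - 1 and evaluate at 1. *)
Lemma prod_one_sub_zetaX : \prod_(1 <= t < p) (1 - zeta p ^+ t) = p%:R.
Proof.
have := factor_Xn_sub_1 zeta_prim_root.
rewrite big_ltn ?prime_gt0 // expr0 subrX1 => /mulfI eqX.
have {eqX} := eqX (negbT (polyXsubC_eq0 1)).
move/(congr1 (horner^~ 1)); rewrite horner_prod horner_sum /=.
under eq_bigr do rewrite hornerXsubC.
under [in RHS]eq_bigr do rewrite hornerXn expr1n.
by rewrite sumr_const card_ord.
Qed.

Lemma exists_zeta_conjugates :
  exists nu : nat -> {rmorphism algC -> algC},
    forall t, (0 < t < p)%N -> nu t (zeta p) = zeta p ^+ t.
Proof.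
have nu_t t : {u : {rmorphism algC -> algC} |
                (0 < t < p)%N -> u (zeta p) = zeta p ^+ t}.
  have [co_tp | nco_tp] := boolP (coprime t p).
    have [u uE] := Qn_aut_exists co_tp; exists u => _.
    exact: uE (prim_expr_order zeta_prim_root).
  exists idfun => /andP[t_gt0 t_lt_p]; move: nco_tp.
  by rewrite coprime_sym prime_coprime // gtnNdvd.
by exists (fun t => sval (nu_t t)) => t; exact: svalP (nu_t t).
Qed.

End Cyclotomic.

Section Zzeta.
Variable p : nat.

Lemma Zzeta_int_zetaX (c : int) i : Zzeta p (c%:~R * zeta p ^+ i).
Proof.
exists (c%:P * 'X^i); rewrite rmorphM /= map_polyC map_polyXn /=.
by rewrite hornerCM hornerXn.
Qed.

Lemma Zzeta_int (c : int) : Zzeta p c%:~R.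
Proof. by have := Zzeta_int_zetaX c 0; rewrite mulr1. Qed.

Lemma ZzetaD x y : Zzeta p x -> Zzeta p y -> Zzeta p (x + y).
Proof. by move=> [q ->] [q' ->]; exists (q + q'); rewrite rmorphD hornerD. Qed.

Lemma ZzetaM x y : Zzeta p x -> Zzeta p y -> Zzeta p (x * y).
Proof. by move=> [q ->] [q' ->]; exists (q * q'); rewrite rmorphM hornerM. Qed.

Lemma Zzeta_sum (I : Type) (r : seq I) (P : pred I) (F : I -> algC) :
  (forall i, P i -> Zzeta p (F i)) -> Zzeta p (\sum_(i <- r | P i) F i).
Proof.
move=> ZF; elim/big_rec: _ => [|i x Pi Zx]; first exact: (Zzeta_int 0).
exact: ZzetaD (ZF i Pi) Zx.
Qed.

Lemma Zzeta_Qzeta x : Zzeta p x -> Qzeta p x.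
Proof.
move=> [q ->]; exists (map_poly intr q); rewrite -map_poly_comp.
by congr (_.[_]); apply: eq_map_poly => c /=; rewrite rmorph_int.
Qed.

Lemma Zzeta_Aint x : prime p -> Zzeta p x -> x \in Aint.
Proof.
move=> p_pr [q ->]; rewrite horner_coef rpred_sum // => i _.
rewrite coef_map /=; apply: rpredM; first exact: Aint_int.
by apply: rpredX; exact: zeta_Aint.
Qed.

Lemma Zzeta_rmorph (u : {rmorphism algC -> algC}) k x :
  u (zeta p) = zeta p ^+ k -> Zzeta p x -> Zzeta p (u x).
Proof.
move=> uE [q ->]; rewrite horner_coef rmorph_sum; apply: Zzeta_sum => i _.
by rewrite rmorphM rmorphXn uE coef_map /= rmorph_int -exprM; apply: Zzeta_int_zetaX.
Qed.

End Zzeta.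

Section IntegralCoordinates.
Variables (p : nat) (nu : nat -> {rmorphism algC -> algC}).
Hypotheses (p_pr : prime p)
  (nuE : forall t, (0 < t < p)%N -> nu t (zeta p) = zeta p ^+ t).

Let p_gt0 := prime_gt0 p_pr.

Lemma nu_one_sub_zeta t : (0 < t < p)%N -> nu t (1 - zeta p) = 1 - zeta p ^+ t.
Proof. by move=> t_p; rewrite rmorphB rmorph1 nuE. Qed.

(* Taking the norm: k^(p-1) = N(k) = N(1 - zeta) N(W) = p N(W). *)
Lemma int_dvd_one_sub_zeta (k : int) W :
  W \in Aint -> k%:~R = (1 - zeta p) * W -> (p%:Z %| k)%Z.
Proof.
move=> W_Aint kE; pose V := \prod_(1 <= t < p) nu t W.
have V_Aint : V \in Aint by rewrite rpred_prod // => t _; rewrite Aint_aut.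
have kV : k%:~R ^+ p.-1 = p%:R * V :> algC.
  rewrite -(prod_one_sub_zetaX p_pr) -big_split /= -[p.-1]subn1.
  rewrite -prodr_const_nat; apply: eq_big_nat => t t_p.
  by rewrite -nu_one_sub_zeta // -rmorphM -kE rmorph_int.
have p_neq0 : (p%:R : algC) != 0 by rewrite pnatr_eq0 -lt0n.
have V_rat : V \in Crat.
  by rewrite -(mulKf p_neq0 V) -kV rpredM ?rpredV ?rpredX ?rpred_int ?rpred_nat.
have /intrP[m Vm] := Cint_rat_Aint V_rat V_Aint.
have km : k ^+ p.-1 = p%:Z * m.
  by apply: (@intr_inj algC); rewrite rmorphXn rmorphM /= kV Vm.
have : (p %| `|k| ^ p.-1)%N by rewrite -abszX km abszM dvdn_mulr.
by rewrite Euclid_dvdX // => /andP[].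
Qed.

Lemma trace_mul_one_sub_zeta N (a : nat -> rat) : (N.+1 <= p.-1)%N ->
  \sum_(1 <= t < p) nu t ((\sum_(i < N.+1) ratr (a i) * zeta p ^+ i) * (1 - zeta p))
  = p%:R * ratr (a 0%N).
Proof.
move=> N_lt; have E t : (1 <= t < p)%N ->
    nu t ((\sum_(i < N.+1) ratr (a i) * zeta p ^+ i) * (1 - zeta p))
  = \sum_(i < N.+1) ratr (a i) * ((zeta p ^+ i) ^+ t - (zeta p ^+ i.+1) ^+ t).
  move=> t_p; rewrite rmorphM nu_one_sub_zeta // rmorph_sum big_distrl /=.
  apply: eq_bigr => i _; rewrite rmorphM fmorph_rat rmorphXn nuE // -mulrA.
  rewrite mulrBr mulr1 -exprSr.
  by rewrite [(zeta p ^+ t) ^+ i]exprAC [(zeta p ^+ t) ^+ i.+1]exprAC.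
rewrite (eq_big_nat _ _ E) exchange_big /=.
under eq_bigr do rewrite -mulr_sumr sumrB !sum_expr_zetaX //.
rewrite big_ord_recl /= dvdn0 gtnNdvd ?prime_gt1 // opprK big1 ?addr0.
  by rewrite -{2}(prednK p_gt0) -natr1 mulrC.
move=> i _; rewrite /bump /= !add1n !gtnNdvd ?subrr ?mulr0 //.
all: by have := ltn_ord i; move: N_lt p_gt0; clear; lia.
Qed.

Lemma coord0_int N (a : nat -> rat) : (N.+1 <= p.-1)%N ->
  (\sum_(i < N.+1) ratr (a i) * zeta p ^+ i) \in Aint ->
  (ratr (a 0%N) : algC) \in Num.int.
Proof.
move=> N_lt; set y := \sum_(i < _) _ => y_Aint.
have trE := trace_mul_one_sub_zeta a N_lt; rewrite -/y in trE.
set c := p%:R * _ in trE.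
have c_Aint : c \in Aint.
  by rewrite -trE rpred_sum // => t _; rewrite Aint_aut rpredM ?rpredB ?(zeta_Aint p_pr).
have c_rat : c \in Crat by rewrite /c -ratr_nat -rmorphM Crat_rat.
have /intrP[k ck] := Cint_rat_Aint c_rat c_Aint.
(* 1 - zeta^t = (1 - zeta)(1 + zeta + ... + zeta^(t-1)) *)
pose W := \sum_(1 <= t < p) nu t y * \sum_(i < t) zeta p ^+ i.
have W_Aint : W \in Aint.
  rewrite rpred_sum // => t _; rewrite rpredM ?Aint_aut //.
  by rewrite rpred_sum // => i _; rewrite rpredX ?(zeta_Aint p_pr).
have cW : k%:~R = (1 - zeta p) * W.
  rewrite -ck -trE mulr_sumr; apply: eq_big_nat => t t_p.
  rewrite rmorphM nu_one_sub_zeta // mulrCA; congr (_ * _).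
  by rewrite -opprB subrX1 -mulNr opprB.
have /dvdzP[l kE] := int_dvd_one_sub_zeta W_Aint cW.
have p_neq0 : (p%:R : algC) != 0 by rewrite pnatr_eq0 -lt0n.
suff -> : (ratr (a 0%N) : algC) = l%:~R by rewrite rpred_int.
by apply: (mulfI p_neq0); rewrite -/c ck kE rmorphM /= mulrC.
Qed.

Lemma coords_int N (a : nat -> rat) : (N <= p.-1)%N ->
  (\sum_(i < N) ratr (a i) * zeta p ^+ i) \in Aint ->
  forall i, (i < N)%N -> (ratr (a i) : algC) \in Num.int.
Proof.
elim: N a => [//|N IH] a N_lt y_Aint [_|i i_lt]; first exact: coord0_int N_lt y_Aint.
have a0_int := coord0_int N_lt y_Aint.
apply: (IH (fun i => a i.+1) (ltnW N_lt)) => //.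
(* (y - a_0) zeta^(p-1) = (y - a_0) / zeta has coordinates a_1, ..., a_N. *)
have -> : \sum_(i < N) ratr (a i.+1) * zeta p ^+ i =
    ((\sum_(i < N.+1) ratr (a i) * zeta p ^+ i) - ratr (a 0%N)) * zeta p ^+ p.-1.
  rewrite big_ord_recl /= mulr1 addrC addKr mulr_suml.
  apply: eq_bigr => j _; rewrite -mulrA -exprD /bump /= add1n addSnnS prednK //.
  by rewrite exprD (prim_expr_order (zeta_prim_root p_pr)) mulr1.
apply: rpredM; last by apply: rpredX; exact: zeta_Aint.
by apply: rpredB => //; exact: Aint_Cint.
Qed.

End IntegralCoordinates.

Lemma Qzeta_Aint_Zzeta p y : prime p -> Qzeta p y -> y \in Aint -> Zzeta p y.
Proof.
move=> p_pr [q ->]; have p_gt0 := prime_gt0 p_pr.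
have [nu nuE] := exists_zeta_conjugates p_pr.
(* Reducing q modulo Phi = 1 + X + ... + X^(p-1) gives coordinates in the basis
   1, zeta, ..., zeta^(p-2). *)
pose Phi : {poly rat} := \poly_(i < p) 1.
have Phi_zeta : (map_poly ratr Phi).[zeta p] = 0 :> algC.
  rewrite (horner_coef_wide _ (n := p)) ?size_map_poly ?size_poly //.
  under eq_bigr do rewrite coef_map coef_poly ltn_ord /= rmorph1 mul1r.
  rewrite sum_exprs_root1_eq0 ?(prim_expr_order (zeta_prim_root p_pr)) //.
  by rewrite -[zeta p]expr1 zetaX_eq1 ?dvdn1 ?neq_ltn ?prime_gt1 ?orbT.
have size_Phi : size Phi = p by rewrite size_poly_eq // oner_eq0.
have Phi_neq0 : Phi != 0 by rewrite -size_poly_eq0 size_Phi -lt0n.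
pose q' := q %% Phi.
have size_q' : (size q' <= p.-1)%N.
  by have := ltn_modp q Phi; rewrite Phi_neq0 size_Phi; case: (p) p_gt0.
have -> : (map_poly ratr q).[zeta p] = \sum_(i < p.-1) ratr q'`_i * zeta p ^+ i.
  rewrite {1}(divp_eq q Phi) rmorphD rmorphM hornerD hornerM Phi_zeta mulr0 add0r.
  rewrite (horner_coef_wide _ (n := p.-1)) ?size_map_poly //.
  by apply: eq_bigr => i _; rewrite coef_map.
move=> /(coords_int p_pr nuE (leqnn _)) coord_int.
apply: Zzeta_sum => i _; have := coord_int i (ltn_ord i).
by rewrite intrEfloor => /eqP <-; apply: Zzeta_int_zetaX.
Qed.

Section PrimitiveRootModp.
Variables (p r : nat).
Hypotheses (p_pr : prime p) (r_prim : (p.-1).-primitive_root (r%:R : 'F_p)).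

Lemma prim_root_expn_pred : r ^ p.-1 = 1 %[mod p].
Proof.
by rewrite -(val_Fp_nat p_pr) -(val_Fp_nat p_pr 1) natrX (prim_expr_order r_prim).
Qed.

Lemma prim_root_dvdn_half : odd p -> (p %| r ^ (p.-1)./2 + 1)%N.
Proof.
move=> p_odd; set h := (p.-1)./2; have p_gt1 := prime_gt1 p_pr.
have h2 : (h * 2 = p.-1)%N by rewrite /h -(odd_halfK p_odd) doubleK muln2 odd_halfK.
have : ((r%:R : 'F_p) ^+ h) ^+ 2 = 1 by rewrite -exprM h2 (prim_expr_order r_prim).
move/eqP; rewrite sqrf_eq1 => /orP[/eqP rh1 | /eqP rhN1].
  have := prim_order_dvd r_prim h; rewrite rh1 eqxx => /dvdn_leq.
  by move: h2 p_gt1 p_odd; clear; lia.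
by rewrite (dvdn_pcharf (pchar_Fp p_pr)) natrD natrX rhN1 addNr.
Qed.

Lemma prim_root_mod_expn a : ~~ (p %| a)%N -> exists k, a = r ^ k %[mod p].
Proof.
move=> ndvd_a; have p_gt0 := prime_gt0 p_pr.
have a_neq0 : (a%:R : 'F_p) != 0 by rewrite -(dvdn_pcharf (pchar_Fp p_pr)).
have a_unity : (a%:R : 'F_p) ^+ p.-1 = 1.
  have := expf_card (a%:R : 'F_p); rewrite card_Fp // => a_card.
  by apply: (mulIf a_neq0); rewrite -exprSr prednK // a_card mul1r.
have [k ak] := prim_rootP r_prim a_unity.
by exists k; have := congr1 val ak; rewrite -natrX /= !val_Fp_nat.
Qed.

End PrimitiveRootModp.

Section GaloisAction.
Variables (p r : nat) (lam : int) (s : {rmorphism algC -> algC}).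
Hypotheses (p_pr : prime p) (p_odd : odd p)
  (r_prim : (p.-1).-primitive_root (r%:R : 'F_p))
  (lamE : (lam * (r%:Z - 1) = 1 %[mod p%:Z])%Z)
  (sE : s (zeta p) = zeta p ^+ r).

Let p_gt0 := prime_gt0 p_pr.
Let zeta_prim := zeta_prim_root p_pr.

Definition zz_at (a : nat) := zeta p ^ lam * alpha p r * (1 - zeta p ^+ a).

(* s(zeta^lam) / zeta^lam = zeta^(lam (r - 1)) = zeta *)
Lemma rmorph_zeta_lam : s (zeta p ^ lam) = zeta p ^ lam * zeta p.
Proof.
have z_neq0 := zeta_neq0 p_pr.
rewrite fmorphXz sE -[zeta p ^+ r]/(zeta p ^ r%:Z) exprz_exp.
have -> : (r%:Z * lam = lam + lam * (r%:Z - 1))%R by ring.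
rewrite expfzDr //; congr (_ * _).
rewrite (divz_eq (lam * (r%:Z - 1)) p%:Z) lamE modz_small; last first.
  by rewrite ler01 ltz_nat prime_gt1.
rewrite expfzDr // [(_ * p%:Z)]mulrC -exprz_exp expr1z.
by rewrite -[zeta p ^ p%:Z]/(zeta p ^+ p) (prim_expr_order zeta_prim) exp1rz mul1r.
Qed.

(* s permutes the factors of (1 - zeta) alpha cyclically, and
   1 - zeta^(r^((p-1)/2)) = 1 - zeta^(-1) = - zeta^(-1) (1 - zeta). *)
Lemma rmorph_alpha : s (alpha p r) = - zeta p ^+ p.-1 * alpha p r.
Proof.
set h := (p.-1)./2.
have z1_neq0 : 1 - zeta p != 0.
  by rewrite subr_eq0 eq_sym -[zeta p]expr1 zetaX_eq1 // dvdn1 neq_ltn prime_gt1 ?orbT.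
have zrh : zeta p ^+ (r ^ h) = zeta p ^+ p.-1.
  apply: (mulIf (zeta_neq0 p_pr)); rewrite -!exprSr prednK // (prim_expr_order zeta_prim).
  by apply/eqP; rewrite zetaX_eq1 // -addn1 prim_root_dvdn_half.
have s_alpha : s (alpha p r) = \prod_(j < h) (1 - zeta p ^+ (r ^ j.+1)).
  rewrite rmorph_prod; apply: eq_bigr => j _.
  by rewrite rmorphB rmorph1 rmorphXn sE -exprM expnS.
apply: (mulfI z1_neq0); transitivity (\prod_(j < h.+1) (1 - zeta p ^+ (r ^ j))).
  by rewrite big_ord_recl expn0 expr1 s_alpha.
rewrite big_ord_recr /= -/(alpha p r) zrh.
have -> : 1 - zeta p ^+ p.-1 = - zeta p ^+ p.-1 * (1 - zeta p).
  by rewrite mulrBr mulr1 mulNr opprK mulrC (zeta_mul_expr_pred p_pr) addrC.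
by ring.
Qed.

Lemma iter_zz k : iter k s (zz p r lam) = (-1) ^+ k * zz_at (r ^ k).
Proof.
elim: k => [|k IH]; first by rewrite mul1r /zz_at expn0 expr1.
rewrite iterS IH rmorphM rmorphXn rmorphN1 /zz_at !rmorphM rmorphB rmorph1 rmorphXn.
rewrite sE -exprM expnS [(r * _)%N]mulnC rmorph_zeta_lam rmorph_alpha.
set L := zeta p ^ lam; set W := zeta p ^+ p.-1; set A := alpha p r.
rewrite (_ : L * zeta p * (- W * A) = - (L * A) * (zeta p * W)); last by ring.
by rewrite (zeta_mul_expr_pred p_pr) mulr1 exprS; ring.
Qed.

Lemma zz_at_conjugate a :
  zz_at a = 0 \/ exists k, zz_at a = (-1) ^+ k * iter k s (zz p r lam).
Proof.
have [dvd_a | ndvd_a] := boolP (p %| a)%N.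
  by left; move: dvd_a; rewrite -zetaX_eq1 // /zz_at => /eqP ->; rewrite subrr mulr0.
right; have [k ak] := prim_root_mod_expn p_pr r_prim ndvd_a.
exists k; rewrite iter_zz mulrA -exprMn mulrNN mulr1 expr1n mul1r /zz_at.
by congr (_ * (1 - _)); apply/eqP; rewrite (eq_prim_root_expr zeta_prim) ak.
Qed.

Lemma iter_zz_period k : iter (k + p.-1) s (zz p r lam) = iter k s (zz p r lam).
Proof.
rewrite iterD; congr (iter k s _); rewrite iter_zz -signr_odd.
have -> : odd p.-1 = false by move: p_odd; rewrite -{1}(prednK p_gt0) /= => /negbTE.
rewrite mul1r /zz_at; congr (_ * (1 - _)).
rewrite -{2}[zeta p]expr1; apply/eqP.
by rewrite (eq_prim_root_expr zeta_prim) prim_root_expn_pred.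
Qed.

End GaloisAction.

Section ImodClosure.
Variables (p n r : nat) (lam : int) (s : algC -> algC).

Lemma Imod0 : Imod p n r lam s 0.
Proof. by exists (fun _ => 0); rewrite big1 // => i _; rewrite mulr0z. Qed.

Lemma ImodD a b : Imod p n r lam s a -> Imod p n r lam s b -> Imod p n r lam s (a + b).
Proof.
move=> [c ->] [d ->]; exists (fun i => c i + d i); rewrite -big_split /=.
by apply: eq_bigr => i _; rewrite mulrzDr.
Qed.

Lemma ImodMz a (e : int) : Imod p n r lam s a -> Imod p n r lam s (a *~ e).
Proof.
move=> [c ->]; exists (fun i => c i * e); rewrite mulrz_suml.
by apply: eq_bigr => i _; rewrite mulrzA.
Qed.

Lemma ImodB a b : Imod p n r lam s a -> Imod p n r lam s b -> Imod p n r lam s (a - b).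
Proof. by move=> Ia Ib; rewrite -mulrN1z; apply: ImodD Ia (ImodMz _ Ib). Qed.

Lemma Imod_sum (I : Type) (rs : seq I) (P : pred I) (F : I -> algC) :
  (forall i, P i -> Imod p n r lam s (F i)) ->
  Imod p n r lam s (\sum_(i <- rs | P i) F i).
Proof.
move=> IF; elim/big_rec: _ => [|i x Pi Ix]; first exact: Imod0.
exact: ImodD (IF i Pi) Ix.
Qed.

Lemma Imod_iter k : (0 < n)%N ->
  iter n s (xx p n r lam s) = xx p n r lam s ->
  Imod p n r lam s (iter k s (xx p n r lam s)).
Proof.
move=> n_gt0 x_fixed; pose i0 := Ordinal (ltn_pmod k n_gt0).
exists (fun i => (i == i0)%:Z); rewrite (bigD1 i0) //= eqxx mulr1z big1 ?addr0.
  by rewrite [in LHS](divn_eq k n) addnC iterD iterM (iter_fix _ x_fixed).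
by move=> j /negbTE ->; rewrite mulr0z.
Qed.

End ImodClosure.

Definition traceK (p n : nat) (s : {rmorphism algC -> algC}) (w : algC) : algC :=
  \sum_(1 <= j < ((p.-1) %/ n).+1) iter (j * n) s w.

Lemma traceK_is_zmod_morphism p n s : zmod_morphism (traceK p n s).
Proof. by move=> a b; rewrite /traceK -sumrB; apply: eq_bigr => j _; rewrite rmorphB. Qed.

HB.instance Definition _ p n s :=
  GRing.isZmodMorphism.Build algC algC (traceK p n s) (traceK_is_zmod_morphism p n s).

Section Trace.
Variables (p n r : nat) (lam : int) (s : {rmorphism algC -> algC}).
Hypotheses (p_pr : prime p) (p_odd : odd p)
  (r_prim : (p.-1).-primitive_root (r%:R : 'F_p))
  (lamE : (lam * (r%:Z - 1) = 1 %[mod p%:Z])%Z)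
  (sE : s (zeta p) = zeta p ^+ r)
  (n_gt0 : (0 < n)%N) (n_dvd : (n %| p.-1)%N).

Local Notation x := (xx p n r lam s).
Local Notation trK := (traceK p n s).

Lemma traceK_iter k w : trK (iter k s w) = iter k s (trK w).
Proof. by rewrite /traceK rmorph_sum; apply: eq_bigr => j _ /=; rewrite -!iterD addnC. Qed.

Lemma traceK_mul_fixed w y : iter n s y = y -> trK (w * y) = trK w * y.
Proof.
move=> y_fixed; rewrite /traceK mulr_suml; apply: eq_bigr => j _.
by rewrite rmorphM /= !iterM (iter_fix _ y_fixed).
Qed.

Lemma iter_xx_fixed : iter n s x = x.
Proof.
have m_gt0 : (0 < p.-1 %/ n)%N by rewrite divn_gt0 // dvdn_leq // -subn1 subn_gt0 prime_gt1.
rewrite [x]/(trK (zz p r lam)) -traceK_iter /traceK; under eq_bigr do rewrite -iterD -mulSnr.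
rewrite big_nat_recr // big_nat_recl //= addrC; congr (_ + _).
by rewrite mulSn divnK // iter_zz_period // mul1n.
Qed.

Lemma Imod_traceK_zz_at a : Imod p n r lam s (trK (zz_at p r lam a)).
Proof.
have [-> | [k ->]] := zz_at_conjugate p_pr p_odd r_prim lamE sE a.
  by rewrite raddf0; apply: Imod0.
rewrite mulrC traceK_mul_fixed; last by rewrite rmorphXn rmorphN1.
have -> : (-1) ^+ k = ((-1) ^+ k : int)%:~R :> algC by rewrite rmorph_sign.
rewrite traceK_iter -[trK (zz p r lam)]/x mulrzr.
by apply: ImodMz; apply: Imod_iter iter_xx_fixed.
Qed.

Lemma principal_Imod y : OK p n s y -> Imod p n r lam s (x * y).
Proof.
move=> [[y_Q y_fixed] y_Aint].
have [q yE] := Qzeta_Aint_Zzeta p_pr y_Q y_Aint.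
rewrite [x]/(trK (zz p r lam)) -(traceK_mul_fixed _ y_fixed) yE horner_coef mulr_sumr raddf_sum.
apply: Imod_sum => i _; rewrite coef_map /= mulrzl mulrzAr raddfMz.
have -> : zz p r lam * zeta p ^+ i = zz_at p r lam i.+1 - zz_at p r lam i.
  by rewrite /zz /zz_at exprSr; ring.
by rewrite raddfB; apply/ImodMz/ImodB; apply: Imod_traceK_zz_at.
Qed.

Lemma Zzeta_iter_xx_div (x_neq0 : x != 0) :
  Zzeta p (s x / x) -> forall i, Zzeta p (iter i s x / x).
Proof.
move=> Zs; elim => [|i IH]; first by rewrite divff //; apply: (Zzeta_int p 1).
have -> : iter i.+1 s x / x = s (iter i s x / x) * (s x / x).
  by rewrite iterS rmorphM fmorphV mulrA divfK ?fmorph_eq0.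
by apply: ZzetaM => //; apply: Zzeta_rmorph sE IH.
Qed.

Lemma Imod_principal w :
  Zzeta p (s x / x) -> Imod p n r lam s w -> principal p n r lam s w.
Proof.
move=> Zs [c ->]; have [x0 | x_neq0] := eqVneq x 0.
  exists 0; last by rewrite x0 mulr0 big1 // => i _; rewrite rmorph0 mul0rz.
  by split; [split; [exists 0; rewrite rmorph0 horner0 | rewrite rmorph0] | exact: Aint0].
pose y := \sum_(i < n) (iter i s x / x) *~ c i.
have Zy : Zzeta p y.
  apply: Zzeta_sum => i _; rewrite -mulrzr.
  by apply: ZzetaM; [apply: Zzeta_iter_xx_div | apply: Zzeta_int].
exists y; last first.
  by rewrite mulr_sumr; apply: eq_bigr => i _; rewrite mulrzAr mulrC divfK.
split; last exact: Zzeta_Aint p_pr Zy.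
split; first exact: Zzeta_Qzeta.
rewrite rmorph_sum; apply: eq_bigr => i _.
by rewrite rmorphMz rmorphM fmorphV /= -iterD addnC iterD iter_xx_fixed.
Qed.

End Trace.

Theorem theorem4 (n p r : nat) (lam : int) (s : {rmorphism algC -> algC}) :
  (1 < n)%N -> odd n -> prime p -> p = 1 %[mod n] ->
  (p.-1).-primitive_root (r%:R : 'F_p) ->
  (lam * (r%:Z - 1) = 1 %[mod p%:Z])%Z ->
  s (zeta p) = zeta p ^+ r ->
  Zzeta p (s (xx p n r lam s) / xx p n r lam s) ->
  forall w : algC, Imod p n r lam s w <-> principal p n r lam s w.
Proof.
move=> n_gt1 _ p_pr p_mod r_prim lamE sE Zs w.
have n_gt0 : (0 < n)%N by apply: ltnW.
have n_dvd : (n %| p.-1)%N.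
  by rewrite -subn1 -eqn_mod_dvd ?prime_gt0 //; apply/eqP.
have p_odd : odd p.
  case: (even_prime p_pr) n_dvd => // ->; rewrite dvdn1 => /eqP n1.
  by rewrite n1 in n_gt1.
by split=> [|[y OKy ->]]; [apply: Imod_principal Zs | apply: principal_Imod OKy].
Qed.
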